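(* Let $f:\mathbb{R}^n\to\mathbb{R}$ be differentiable with $L$-Lipschitz gradient in the Euclidean norm, i.e. $\|\nabla f(y)-\nabla f(x)\|\le L\|y-x\|$ for all $x,y$ (some $L>0$), and satisfy the Polyak--Łojasiewicz condition $f(x)-f^*\le \frac{1}{2\mu}\|\nabla f(x)\|^2$ for all $x\in\mathbb{R}^n$, with some $\mu>0$, where $f^*=f(x^* )$ for a minimizer $x^*$ of $f$. Suppose that an inexact gradient $\tilde\nabla f(x)$ is available satisfying $\|\tilde\nabla f(x)-\nabla f(x)\|\le \alpha\|\nabla f(x)\|$ for all $x$, with a known $\alpha\in[0,0.5)$. Let $\varepsilon>0$, and set $\xi=(1-2\alpha)^2$ and $L_{max}=2L$. Run Algorithm 1 (described in the context) and suppose one of the following holds: (1) the algorithm has performed $N_*$ iterations, where $N_*=\left\lceil \frac{L_{max}}{\mu\xi}\log\left(\frac{\mu(f(x^0)-f^* )}{\varepsilon}\right)\right\rceil$; or (2) for some $N<N_*$ the stopping rule $\|\tilde\nabla f(x^N)\|^2\le 2\varepsilon(1-\alpha)^2$ holds. Then the output point $\hat x$ (namely $\hat x=x^{N_*}$ in case (1), $\hat x=x^N$ in case (2)) satisfies $$f(\hat x)-f^*\le\frac{\varepsilon}{\mu}\quad\text{and}\quad \|\hat x-x^0\|\le \frac{2L_{max}}{\mu\xi}\sqrt{\frac{2}{L_{min}}\bigl(f(x^0)-f^*\bigr)}.$$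
   Context: Algorithm 1 (gradient descent with adaptive tuning of $L$). Input: $x^0\in\mathbb{R}^n$, constants $L_{min}\ge\mu>0$, $L_0\ge L_{min}$, and $\alpha\in[0,0.5)$. Step 1: set $k=0$. Step 2: set $L_{k+1}=\max\{L_k/2,\,L_{min}\}$. Step 3: set $x^{k+1}=x^k-\frac{1}{L_{k+1}}\frac{1-2\alpha}{1-\alpha}\tilde\nabla f(x^k)$. Step 4: if $$f(x^{k+1})\le f(x^k)+\langle\tilde\nabla f(x^k),x^{k+1}-x^k\rangle+\frac{L_{k+1}}{2}\|x^{k+1}-x^k\|^2+\frac{\alpha}{1-\alpha}\|\tilde\nabla f(x^k)\|\,\|x^{k+1}-x^k\|,$$ go to Step 5; otherwise replace $L_{k+1}$ by $2L_{k+1}$ and return to Step 3. Step 5: if the stopping rule is not satisfied, set $k:=k+1$ and go to Step 2. Output: $x^k$. Here $\log$ is the natural logarithm and $\|\cdot\|$ the Euclidean norm.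
   Formalization: The inputs $L_{min}$ and $L_0$ of Algorithm 1 are both at most $L_{max}=2L$. The paper assumes this as well. *)

From HB Require Import structures.
From mathcomp Require Import all_boot all_order all_algebra.
From mathcomp Require Import all_classical all_reals all_analysis.
Set Implicit Arguments. Unset Strict Implicit. Unset Printing Implicit Defensive.
Import Order.TTheory GRing.Theory Num.Theory.
Import numFieldNormedType.Exports.
Local Open Scope ring_scope.

Definition dotv {R : realType} {n : nat} (u v : 'rV[R]_n) : R :=
  \sum_(i < n) u 0 i * v 0 i.
Definition enorm {R : realType} {n : nat} (v : 'rV[R]_n) : R :=
  Num.sqrt (dotv v v).

Definition alg1_step {R : realType} {n : nat} (gt : 'rV[R]_n -> 'rV[R]_n)
  (alpha Lt : R) (x : 'rV[R]_n) : 'rV[R]_n :=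
  x - ((1 / Lt) * ((1 - 2 * alpha) / (1 - alpha))) *: gt x.

Definition alg1_accept {R : realType} {n : nat} (f : 'rV[R]_n -> R)
  (gt : 'rV[R]_n -> 'rV[R]_n) (alpha Lt : R) (x : 'rV[R]_n) : Prop :=
  let y := alg1_step gt alpha Lt x in
  f y <= f x + dotv (gt x) (y - x) + Lt / 2 * enorm (y - x) ^+ 2
         + alpha / (1 - alpha) * enorm (gt x) * enorm (y - x).

(* (xs, Ls) is the (unique) sequence of iterates x^k and constants L_k
   produced by Algorithm 1 (ignoring the stopping rule): L_{k+1} is
   max(L_k/2, L_min) * 2^j where j is the least number of doublings for which
   the test of Step 4 succeeds, and x^{k+1} is the corresponding step. *)
Definition alg1_run {R : realType} {n : nat} (f : 'rV[R]_n -> R)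
  (gt : 'rV[R]_n -> 'rV[R]_n) (alpha Lmin L0 : R) (x0 : 'rV[R]_n)
  (xs : nat -> 'rV[R]_n) (Ls : nat -> R) : Prop :=
  xs 0%N = x0 /\ Ls 0%N = L0 /\
  forall k : nat, exists j : nat,
    let Lstart := Num.max (Ls k / 2) Lmin in
    [/\ Ls k.+1 = Lstart * 2 ^+ j,
        alg1_accept f gt alpha (Ls k.+1) (xs k),
        (forall i : nat, (i < j)%N -> ~ alg1_accept f gt alpha (Lstart * 2 ^+ i) (xs k)) &
        xs k.+1 = alg1_step gt alpha (Ls k.+1) (xs k)].

(* N_* = ceil( Lmax/(mu xi) * log( mu (f(x^0) - f_star) / eps ) ), as a natural
   number (taken to be 0 when the ceiling is nonpositive). *)
Definition alg1_Nstar {R : realType} (Lmax mu xi gap eps : R) : nat :=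
  let t := Lmax / (mu * xi) * ln (mu * gap / eps) in
  if 0 < t then `|Num.ceil t|%N else 0%N.

(* Step 4 always accepts a trial constant at least L (descent lemma plus the
   relative error bound on the inexact gradient), so every L_k lies in
   [L_min, 2 L].  An accepted step of length s satisfies
   L_(k+1) s = (1 - 2 alpha)/(1 - alpha) |gt| >= (1 - 2 alpha) |grad f|, and its
   sufficient decrease L_(k+1) s^2 / 2 combined with the Polyak-Lojasiewicz
   inequality contracts the gap f(x^k) - min f by the factor 1 - mu xi / L_max;
   after N_* steps the gap is below eps / mu.  The same decrease bounds s^2 by
   2 (f(x^k) - min f) / L_min, so the step lengths decay geometrically with ratio
   sqrt (1 - mu xi / L_max) and their sum gives the distance bound.  Under the
   stopping rule, |grad f| <= |gt| / (1 - alpha) and PL give the gap directly. *)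

From HB Require Import structures.
From mathcomp Require Import all_boot all_order all_algebra.
From mathcomp Require Import all_classical all_reals all_analysis.
From mathcomp Require Import ring lra.
Import Order.TTheory GRing.Theory Num.Theory.
Import numFieldNormedType.Exports.
Local Open Scope classical_set_scope.
Local Open Scope ring_scope.

Section Euclidean.
Context {R : realType} {n : nat}.
Implicit Types (a : R) (u v w : 'rV[R]_n).

Lemma dotvC u v : dotv u v = dotv v u.
Proof. by apply: eq_bigr => i _; rewrite mulrC. Qed.

Lemma dotvDl u w v : dotv (u + w) v = dotv u v + dotv w v.
Proof. by rewrite /dotv -big_split; apply: eq_bigr => i _; rewrite !mxE mulrDl. Qed.

Lemma dotvZl a u v : dotv (a *: u) v = a * dotv u v.
Proof. by rewrite /dotv mulr_sumr; apply: eq_bigr => i _; rewrite !mxE mulrA. Qed.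

Lemma dotvNl u v : dotv (- u) v = - dotv u v.
Proof. by rewrite -scaleN1r dotvZl mulN1r. Qed.

Lemma dotvBl u w v : dotv (u - w) v = dotv u v - dotv w v.
Proof. by rewrite dotvDl dotvNl. Qed.

Lemma dotvDr u w v : dotv v (u + w) = dotv v u + dotv v w.
Proof. by rewrite dotvC dotvDl !(dotvC v). Qed.

Lemma dotvZr a u v : dotv v (a *: u) = a * dotv v u.
Proof. by rewrite dotvC dotvZl dotvC. Qed.

Lemma dotvNr u v : dotv v (- u) = - dotv v u.
Proof. by rewrite dotvC dotvNl dotvC. Qed.

Lemma dotvBr u w v : dotv v (u - w) = dotv v u - dotv v w.
Proof. by rewrite dotvDr dotvNr. Qed.

Lemma dotvv_ge0 v : 0 <= dotv v v.
Proof. by apply: sumr_ge0 => i _; rewrite -expr2 sqr_ge0. Qed.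

Lemma dotvv_eq0 u v : dotv u u = 0 -> dotv u v = 0.
Proof.
move=> /eqP; rewrite psumr_eq0 => [/allP u0|i _]; last by rewrite -expr2 sqr_ge0.
apply: big1 => i _; move: (u0 i (mem_index_enum i)).
by rewrite /= mulf_eq0 orbb => /eqP ->; rewrite mul0r.
Qed.

Lemma enorm_ge0 v : 0 <= enorm v.
Proof. exact: sqrtr_ge0. Qed.

Lemma enorm_sqr v : enorm v ^+ 2 = dotv v v.
Proof. by rewrite sqr_sqrtr // dotvv_ge0. Qed.

Lemma enorm0 : enorm (0 : 'rV[R]_n) = 0.
Proof. by rewrite /enorm /dotv big1 ?sqrtr0 // => i _; rewrite mxE mul0r. Qed.

Lemma enormZ a v : enorm (a *: v) = `|a| * enorm v.
Proof.
by rewrite /enorm dotvZl dotvZr mulrA -expr2 sqrtrM ?sqr_ge0 // sqrtr_sqr.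
Qed.

Lemma enormN v : enorm (- v) = enorm v.
Proof. by rewrite -scaleN1r enormZ normrN normr1 mul1r. Qed.

Lemma enormBC u v : enorm (u - v) = enorm (v - u).
Proof. by rewrite -enormN opprB. Qed.

(* Expand [0 <= |b u - a v|^2] with [a = |u|] and [b = |v|]. *)
Lemma dotv_cauchy_schwarz u v : dotv u v <= enorm u * enorm v.
Proof.
set a := enorm u; set b := enorm v.
have uu : dotv u u = a ^+ 2 by rewrite enorm_sqr.
have vv : dotv v v = b ^+ 2 by rewrite enorm_sqr.
have [a0|a_neq0] := eqVneq a 0.
  by rewrite dotvv_eq0 ?a0 ?mul0r // uu a0 expr0n.
have [b0|b_neq0] := eqVneq b 0.
  by rewrite dotvC dotvv_eq0 ?b0 ?mulr0 // vv b0 expr0n.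
have ab_gt0 : 0 < a * b by rewrite mulr_gt0 // lt_def ?a_neq0 ?b_neq0 ?enorm_ge0.
have := dotvv_ge0 (b *: u - a *: v).
rewrite dotvBl !dotvBr !dotvZl !dotvZr (dotvC v u) uu vv; nra.
Qed.

Lemma ler_enormD u v : enorm (u + v) <= enorm u + enorm v.
Proof.
rewrite -[enorm u + enorm v]ger0_norm ?addr_ge0 ?enorm_ge0 //.
rewrite -sqrtr_sqr {1}/enorm ler_sqrt ?sqr_ge0 //.
rewrite dotvDl !dotvDr (dotvC v u) -!enorm_sqr.
have := dotv_cauchy_schwarz u v; nra.
Qed.

End Euclidean.

Lemma is_derive_along {R : realType} {n : nat} (f : 'rV[R]_n -> R) (x d : 'rV[R]_n) t :
  differentiable f (t *: d + x) ->
  is_derive t (1 : R) (fun s => f (s *: d + x)) ('d f (t *: d + x) d).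
Proof.
move=> df; pose phi s := f (s *: d + x); set p := t *: d + x.
have quot_eq : (fun h : R => h^-1 *: ((phi \o shift t) (h *: 1) - phi t)) =
               (fun h : R => h^-1 *: ((f \o shift p) (h *: d) - f p)).
  by apply: funext => h /=; rewrite /phi /p /= [h%:A]mulr1 scalerDl addrA.
apply: DeriveDef; first by rewrite /derivable quot_eq; exact: diff_derivable.
by rewrite /derive quot_eq -/(derive f p d) deriveE.
Qed.

(* Mean value theorem applied to
   [psi t = f (x + t d) - t <grad x, d> - t^2 L |d|^2 / 2] on [0, 1];
   Cauchy-Schwarz and the Lipschitz bound make [psi'] nonpositive. *)
Lemma descent_lemma {R : realType} {n : nat} {f : 'rV[R]_n -> R}
    {grad : 'rV[R]_n -> 'rV[R]_n} {L : R} :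
  (forall x, differentiable f x /\ forall h, 'd f x h = dotv (grad x) h) ->
  (forall x y, enorm (grad y - grad x) <= L * enorm (y - x)) ->
  forall x d, f (d + x) <= f x + dotv (grad x) d + L / 2 * enorm d ^+ 2.
Proof.
move=> f_grad grad_lip x d.
pose phi t := f (t *: d + x).
have phi_deriv t : is_derive t (1 : R) phi (dotv (grad (t *: d + x)) d).
  by rewrite -(f_grad _).2; apply: is_derive_along; exact: (f_grad _).1.
set g0 := dotv (grad x) d; set K := L / 2 * enorm d ^+ 2.
pose psi := phi - (g0 \*: (@id R) + K \*: ((@id R) * (@id R))).
have psi_deriv t : is_derive t (1 : R) psi
    (dotv (grad (t *: d + x)) d - (g0 *: 1 + K *: (t *: 1 + t *: 1))).
  exact: is_deriveB.
have psi_cont : {within `[0, 1], continuous psi}.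
  by apply: derivable_within_continuous => t _; exact: (psi_deriv t).(ex_derive).
have [c] := MVT ltr01 (fun t _ => psi_deriv t) psi_cont.
rewrite in_itv /= => /andP[c_gt0 c_lt1] psi_mvt.
have : psi 1 <= psi 0.
  rewrite -subr_le0 psi_mvt subr0 mulr1.
  have := dotv_cauchy_schwarz (grad (c *: d + x) - grad x) d.
  have := grad_lip x (c *: d + x).
  rewrite addrK enormZ (ger0_norm (ltW c_gt0)) dotvBl -/g0 => lip cs.
  have := ler_wpM2r (enorm_ge0 d) lip.
  rewrite /GRing.scale /= !mulr1 /K expr2; lra.
change (f (1 *: d + x) - (g0 * 1 + K * (1 * 1))
  <= f (0 *: d + x) - (g0 * 0 + K * (0 * 0)) -> f (d + x) <= f x + g0 + K).
rewrite scale1r scale0r add0r !mulr1 !mulr0 !addr0 subr0; lra.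
Qed.

Lemma geometric_decay {R : realType} {u : nat -> R} {q : R} :
  0 <= q -> (forall k, u k.+1 <= q * u k) -> forall k, u k <= q ^+ k * u 0%N.
Proof.
move=> q_ge0 u_contr; elim=> [|k IHk]; first by rewrite expr0 mul1r.
by rewrite (le_trans (u_contr k)) // exprS -mulrA ler_wpM2l.
Qed.

Lemma enorm_sub_le_geometric {R : realType} {n : nat} {x : nat -> 'rV[R]_n} {r C : R} :
  0 <= r < 1 -> (forall k, enorm (x k.+1 - x k) <= r ^+ k * C) ->
  forall N, enorm (x N - x 0%N) <= C / (1 - r).
Proof.
move=> /andP[r_ge0 r_lt1] steps N.
have C_ge0 : 0 <= C by have := steps 0%N; rewrite expr0 mul1r; apply: le_trans; exact: enorm_ge0.
have partial : (1 - r) * enorm (x N - x 0%N) <= C * (1 - r ^+ N).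
  elim: N => [|k IHk]; first by rewrite subrr enorm0 mulr0 expr0 subrr mulr0.
  have := ler_enormD (x k.+1 - x k) (x k - x 0%N); rewrite addrA subrK => tri.
  have := ler_wpM2l (_ : 0 <= 1 - r) tri; have := steps k; rewrite exprS; nra.
rewrite ler_pdivlMr ?subr_gt0 // mulrC (le_trans partial) // ler_piMr // lerBlDr.
by rewrite lerDl exprn_ge0.
Qed.

Lemma expr1B_le_inv {R : realType} {a Y : R} {N : nat} :
  0 < a <= 1 -> 0 < Y -> ln Y <= a * N%:R -> (1 - a) ^+ N <= Y^-1.
Proof.
move=> /andP[a_gt0 a_le1] Y_gt0 lnY_le.
apply: (@le_trans _ _ (expR (- a) ^+ N)).
  by rewrite lerXn2r ?nnegrE ?expR_ge0 ?subr_ge0 // expR_ge1Dx.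
by rewrite -expRM_natl -(lnK Y_gt0) -expRN ler_expR mulrN lerN2 mulrC.
Qed.

Lemma ln_le_alg1_Nstar {R : realType} {Lmax mu xi : R} (gap eps : R) :
  0 < Lmax -> 0 < mu * xi ->
  ln (mu * gap / eps) <= mu * xi / Lmax * (alg1_Nstar Lmax mu xi gap eps)%:R.
Proof.
move=> Lmax_gt0 muxi_gt0; rewrite /alg1_Nstar.
set t := Lmax / (mu * xi) * ln _.
have a_gt0 : 0 < mu * xi / Lmax by rewrite divr_gt0.
have at_eq : mu * xi / Lmax * t = ln (mu * gap / eps).
  have /lt0r_neq0 := muxi_gt0; rewrite mulf_eq0 negb_or => /andP[mu_neq0 xi_neq0].
  by rewrite /t; field; rewrite xi_neq0 mu_neq0 lt0r_neq0.
rewrite -at_eq; case: ifP => [t_gt0|/negbT]; last first.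
  by rewrite -leNgt => t_le0; rewrite mulr0 pmulr_rle0.
rewrite ler_pM2l // natr_absz ger0_norm ?ceil_ge //.
by rewrite ceil_ge0 (lt_trans _ t_gt0) // ltrN10.
Qed.

Section InexactGradient.
Context {R : realType} {n : nat} {f : 'rV[R]_n -> R}.
Context {grad gt : 'rV[R]_n -> 'rV[R]_n} {L alpha : R}.
Hypothesis f_grad : forall x, differentiable f x /\ forall h, 'd f x h = dotv (grad x) h.
Hypothesis grad_lipschitz : forall x y, enorm (grad y - grad x) <= L * enorm (y - x).
Hypotheses (alpha_ge0 : 0 <= alpha) (alpha_lt_half : alpha < 1 / 2).
Hypothesis gt_rel_err : forall x, enorm (gt x - grad x) <= alpha * enorm (grad x).

Let alpha_lt1 : alpha < 1. Proof. by move: alpha_lt_half; lra. Qed.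
Let subr_alpha_neq0 : 1 - alpha != 0. Proof. by rewrite subr_eq0 eq_sym lt_eqF. Qed.

Lemma enorm_grad_le x : (1 - alpha) * enorm (grad x) <= enorm (gt x).
Proof.
have := ler_enormD (gt x) (grad x - gt x); rewrite addrC subrK enormBC.
have := gt_rel_err x; lra.
Qed.

Lemma alg1_step_sub Lt x :
  alg1_step gt alpha Lt x - x = - ((1 - 2 * alpha) / (1 - alpha) / Lt *: gt x).
Proof. by rewrite /alg1_step addrAC subrr add0r mul1r mulrC. Qed.

Lemma alg1_step_enorm Lt x : 0 < Lt ->
  Lt * enorm (alg1_step gt alpha Lt x - x) = (1 - 2 * alpha) / (1 - alpha) * enorm (gt x).
Proof.
move=> Lt_gt0; rewrite alg1_step_sub enormN enormZ ger0_norm; last first.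
  by rewrite !divr_ge0 ?(ltW Lt_gt0) //; move: alpha_lt_half; lra.
by field; rewrite subr_alpha_neq0 lt0r_neq0.
Qed.

Lemma alg1_accept_ge_lipschitz Lt x : L <= Lt -> alg1_accept f gt alpha Lt x.
Proof.
move=> L_le_Lt; rewrite /alg1_accept /=.
set d := alg1_step gt alpha Lt x - x.
have := descent_lemma f_grad grad_lipschitz x d; rewrite subrK.
have err : dotv (grad x - gt x) d <= alpha / (1 - alpha) * enorm (gt x) * enorm d.
  apply: le_trans (dotv_cauchy_schwarz _ _) _.
  rewrite enormBC ler_wpM2r ?enorm_ge0 // (le_trans (gt_rel_err x)) //.
  rewrite mulrAC ler_pdivlMr ?subr_gt0 // -mulrA ler_wpM2l // mulrC.
  exact: enorm_grad_le.
have : L / 2 * enorm d ^+ 2 <= Lt / 2 * enorm d ^+ 2.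
  by rewrite ler_wpM2r ?sqr_ge0 // ler_pM2r.
move: err; rewrite dotvBl; lra.
Qed.

Lemma alg1_accept_decrease Lt x : 0 < Lt -> alg1_accept f gt alpha Lt x ->
  f (alg1_step gt alpha Lt x) <= f x - Lt / 2 * enorm (alg1_step gt alpha Lt x - x) ^+ 2.
Proof.
move=> Lt_gt0; rewrite /alg1_accept /= alg1_step_sub dotvNr dotvZr -enorm_sqr.
rewrite enormN enormZ ger0_norm; last first.
  by rewrite !divr_ge0 ?(ltW Lt_gt0) //; move: alpha_lt_half; lra.
move=> /le_trans; apply; rewrite le_eqVlt; apply/orP; left; apply/eqP.
by field; rewrite subr_alpha_neq0 lt0r_neq0.
Qed.

Context {Lmin L0 : R} {x0 : 'rV[R]_n} {xs : nat -> 'rV[R]_n} {Ls : nat -> R}.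
Hypotheses (Lmin_gt0 : 0 < Lmin) (Lmin_le_L0 : Lmin <= L0).
Hypotheses (L0_le : L0 <= 2 * L) (Lmin_le : Lmin <= 2 * L).
Hypothesis run : alg1_run f gt alpha Lmin L0 x0 xs Ls.

Lemma alg1_run_x0 : xs 0%N = x0.
Proof. by case: run. Qed.

Lemma alg1_run_accept k : alg1_accept f gt alpha (Ls k.+1) (xs k).
Proof. by case: run => _ [_ /(_ k)[j []]]. Qed.

Lemma alg1_run_step k : xs k.+1 = alg1_step gt alpha (Ls k.+1) (xs k).
Proof. by case: run => _ [_ /(_ k)[j []]]. Qed.

Lemma alg1_run_Ls_bounds k : Lmin <= Ls k <= 2 * L.
Proof.
case: run => _ [Ls0 run_step].
elim: k => [|k /andP[Lmin_le_Lsk Lsk_le]]; first by rewrite Ls0 Lmin_le_L0.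
have [j [-> _ rejected _]] := run_step k.
set L1 := Num.max (Ls k / 2) Lmin in rejected *.
have Lmin_le_L1 : Lmin <= L1 by rewrite le_max lexx orbT.
have L1_le : L1 <= 2 * L.
  by rewrite ge_max Lmin_le andbT; move: Lmin_gt0; lra.
apply/andP; split.
  have L1_ge0 : 0 <= L1 := le_trans (ltW Lmin_gt0) Lmin_le_L1.
  by rewrite (le_trans Lmin_le_L1) // ler_peMr // exprn_ege1 // ler1n.
case: j rejected => [|i] rejected; first by rewrite expr0 mulr1.
have : L1 * 2 ^+ i < L.
  rewrite ltNge; apply/negP => L_le; apply: (rejected i (ltnSn i)).
  exact: alg1_accept_ge_lipschitz.
by rewrite exprS mulrCA; lra.
Qed.

Lemma alg1_run_Ls_gt0 k : 0 < Ls k.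
Proof. by have /andP[+ _] := alg1_run_Ls_bounds k; apply: lt_le_trans. Qed.

Lemma alg1_run_decrease k :
  f (xs k.+1) <= f (xs k) - Ls k.+1 / 2 * enorm (xs k.+1 - xs k) ^+ 2.
Proof.
rewrite alg1_run_step.
by apply: alg1_accept_decrease; [exact: alg1_run_Ls_gt0 | exact: alg1_run_accept].
Qed.

Context {mu : R} {xstar : 'rV[R]_n}.
Local Notation xi := ((1 - 2 * alpha) ^+ 2).
Local Notation rate := (mu * xi / (2 * L)).
Hypotheses (mu_gt0 : 0 < mu) (mu_le_Lmin : mu <= Lmin).
Hypothesis xstar_min : forall x, f xstar <= f x.
Hypothesis PL : forall x, f x - f xstar <= 1 / (2 * mu) * enorm (grad x) ^+ 2.

Lemma PL_sqr x : 2 * mu * (f x - f xstar) <= enorm (grad x) ^+ 2.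
Proof. by rewrite -ler_pdivlMl ?mulr_gt0 //; move: (PL x); rewrite mul1r. Qed.

(* [Lt s = (1 - 2 alpha) / (1 - alpha) |gt| >= (1 - 2 alpha) |grad|], so by PL
   the sufficient decrease [Lt s^2 / 2] is at least [mu xi D / Lt >= rate D]. *)
Lemma alg1_run_gap_contract k :
  f (xs k.+1) - f xstar <= (1 - rate) * (f (xs k) - f xstar).
Proof.
set Lt := Ls k.+1; set s := enorm (xs k.+1 - xs k); set D := f (xs k) - f xstar.
have Lt_gt0 : 0 < Lt := alg1_run_Ls_gt0 k.+1.
have /andP[_ Lt_le] : Lmin <= Lt <= 2 * L := alg1_run_Ls_bounds k.+1.
have step : (1 - 2 * alpha) * enorm (grad (xs k)) <= Lt * s.
  rewrite /s alg1_run_step alg1_step_enorm //.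
  rewrite -[X in X * enorm _](divfK subr_alpha_neq0) -(mulrA _ (1 - alpha)).
  apply: ler_wpM2l; last exact: enorm_grad_le.
  by apply: divr_ge0; move: alpha_lt_half; lra.
have : xi * (2 * mu * D) <= Lt * (Lt * s ^+ 2).
  rewrite mulrA -expr2 -exprMn (le_trans (ler_wpM2l _ (PL_sqr _))) ?sqr_ge0 //.
  by rewrite -exprMn lerXn2r ?nnegrE ?mulr_ge0 ?enorm_ge0 //; move: alpha_lt_half; lra.
move=> key; have := alg1_run_decrease k; rewrite -/Lt -/s.
suff : rate * D <= Lt / 2 * s ^+ 2 by rewrite /D; lra.
have L_gt0 : 0 < 2 * L := lt_le_trans Lmin_gt0 Lmin_le.
have := ler_wpM2r (mulr_ge0 (ltW Lt_gt0) (sqr_ge0 s)) Lt_le.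
rewrite (mulrAC _ (2 * L)^-1) ler_pdivrMr //; lra.
Qed.

Lemma alg1_gap_stop {x eps} :
  enorm (gt x) ^+ 2 <= 2 * eps * (1 - alpha) ^+ 2 -> f x - f xstar <= eps / mu.
Proof.
move=> stop; apply: le_trans (PL x) _.
have : ((1 - alpha) * enorm (grad x)) ^+ 2 <= 2 * eps * (1 - alpha) ^+ 2.
  apply: le_trans stop; rewrite lerXn2r ?nnegrE ?enorm_ge0 ?enorm_grad_le //.
  by rewrite mulr_ge0 ?enorm_ge0 // subr_ge0 ltW.
rewrite exprMn mulrC ler_pM2r ?exprn_gt0 ?subr_gt0 // => grad_sqr.
rewrite (le_trans (ler_wpM2l _ grad_sqr)) ?divr_ge0 ?mulr_ge0 ?(ltW mu_gt0) //.
by rewrite le_eqVlt; apply/orP; left; apply/eqP; field; rewrite lt0r_neq0.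
Qed.

Lemma alg1_run_step_sqr_le k :
  enorm (xs k.+1 - xs k) ^+ 2 <= 2 / Lmin * (f (xs k) - f xstar).
Proof.
have /andP[Lmin_le_Lt _] := alg1_run_Ls_bounds k.+1.
have := alg1_run_decrease k; have := xstar_min (xs k.+1).
have := ler_wpM2l (sqr_ge0 (enorm (xs k.+1 - xs k))) Lmin_le_Lt.
by rewrite (mulrAC 2) ler_pdivlMr //; lra.
Qed.

Let xi_gt0 : 0 < xi.
Proof. by rewrite exprn_gt0 //; move: alpha_lt_half; lra. Qed.

Let rate_bounds : 0 < rate <= 1.
Proof.
have L_gt0 : 0 < 2 * L := lt_le_trans Lmin_gt0 Lmin_le.
have xi_le1 : xi <= 1.
  by apply: exprn_ile1; move: alpha_ge0 alpha_lt_half; lra.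
apply/andP; split; first exact: divr_gt0 (mulr_gt0 mu_gt0 xi_gt0) L_gt0.
rewrite ler_pdivrMr // mul1r (le_trans _ (le_trans mu_le_Lmin Lmin_le)) //.
by rewrite ler_piMr // ltW.
Qed.

Lemma alg1_run_gap_geometric k :
  f (xs k) - f xstar <= (1 - rate) ^+ k * (f x0 - f xstar).
Proof.
have /andP[_ rate_le1] := rate_bounds.
rewrite -alg1_run_x0; apply: (geometric_decay (u := fun k => f (xs k) - f xstar)).
  by rewrite subr_ge0.
exact: alg1_run_gap_contract.
Qed.

Lemma alg1_run_gap_Nstar {eps} : 0 < eps ->
  f (xs (alg1_Nstar (2 * L) mu xi (f x0 - f xstar) eps)) - f xstar <= eps / mu.
Proof.
move=> eps_gt0; set N := alg1_Nstar _ _ _ _ _.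
apply: le_trans (alg1_run_gap_geometric N) _.
have := subr_ge0 (f xstar) (f x0); rewrite xstar_min le_eqVlt => /orP[/eqP<-|D0_gt0].
  by rewrite mulr0 divr_ge0 ?ltW.
have L_gt0 : 0 < 2 * L := lt_le_trans Lmin_gt0 Lmin_le.
have /andP[rate_gt0 _] := rate_bounds.
have muxi_gt0 : 0 < mu * xi := mulr_gt0 mu_gt0 xi_gt0.
have Y_gt0 : 0 < mu * (f x0 - f xstar) / eps by rewrite divr_gt0 ?mulr_gt0.
have := expr1B_le_inv rate_bounds Y_gt0 (ln_le_alg1_Nstar _ eps L_gt0 muxi_gt0).
move=> /(ler_wpM2r (ltW D0_gt0)) /le_trans; apply.
by rewrite invf_div le_eqVlt; apply/orP; left; apply/eqP; field; rewrite !lt0r_neq0.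
Qed.

(* The steps are at most [r ^ k * C] with [r = sqrt (1 - rate)], and their
   geometric sum [C / (1 - r)] is below [2 C / rate] since [rate = (1 - r) (1 + r)]. *)
Lemma alg1_run_dist N :
  enorm (xs N - x0) <=
  2 * (2 * L) / (mu * xi) * Num.sqrt (2 / Lmin * (f x0 - f xstar)).
Proof.
pose a := rate.
set C := Num.sqrt _; pose r := Num.sqrt (1 - a).
have /andP[a_gt0 a_le1] := rate_bounds; rewrite -/a in a_gt0 a_le1.
have r_ge0 : 0 <= r := sqrtr_ge0 _.
have a_eq : a = (1 - r) * (1 + r).
  by rewrite -subr_sqr expr1n sqr_sqrtr ?subr_ge0 // subKr.
have r_lt1 : r < 1 by rewrite -subr_gt0; move: a_gt0; rewrite a_eq; nra.
have steps k : enorm (xs k.+1 - xs k) <= r ^+ k * C.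
  rewrite -(ler_pXn2r (ltn0Sn 1)) ?nnegrE ?enorm_ge0 ?mulr_ge0 ?exprn_ge0 ?sqrtr_ge0 //.
  rewrite (le_trans (alg1_run_step_sqr_le k)) //.
  rewrite exprMn -exprM mulnC exprM sqr_sqrtr ?subr_ge0 // sqr_sqrtr; last first.
    by rewrite mulr_ge0 ?divr_ge0 ?subr_ge0 ?(ltW Lmin_gt0).
  by rewrite mulrCA ler_wpM2l ?divr_ge0 ?(ltW Lmin_gt0) ?alg1_run_gap_geometric.
have := enorm_sub_le_geometric (introT andP (conj r_ge0 r_lt1)) steps N.
rewrite alg1_run_x0 => /le_trans; apply.
have -> : 2 * (2 * L) / (mu * xi) = 2 / a by rewrite /a invf_div !mulrA.
have -> : 2 / a * C = 2 / (1 + r) * (C / (1 - r)).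
  by rewrite a_eq; field; rewrite !lt0r_neq0 ?subr_gt0 // ltr_wpDr.
apply: ler_peMl; first by rewrite divr_ge0 ?sqrtr_ge0 // subr_ge0 ltW.
by rewrite ler_pdivlMr ?mul1r; move: r_lt1 r_ge0; lra.
Qed.

End InexactGradient.

Theorem theorem1 (R : realType) (n : nat)
  (f : 'rV[R]_n -> R) (grad : 'rV[R]_n -> 'rV[R]_n) (gt : 'rV[R]_n -> 'rV[R]_n)
  (L mu alpha eps Lmin L0 : R) (xstar x0 : 'rV[R]_n)
  (xs : nat -> 'rV[R]_n) (Ls : nat -> R) (N : nat) :
  (* f differentiable with gradient grad *)
  (forall x, differentiable f x /\ forall h, 'd f x h = dotv (grad x) h) ->
  (* L-Lipschitz gradient in the Euclidean norm *)
  0 < L ->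
  (forall x y, enorm (grad y - grad x) <= L * enorm (y - x)) ->
  (* x* is a minimizer, f^* = f x* *)
  (forall x, f xstar <= f x) ->
  (* Polyak-Lojasiewicz condition *)
  0 < mu ->
  (forall x, f x - f xstar <= 1 / (2 * mu) * enorm (grad x) ^+ 2) ->
  (* inexact gradient *)
  0 <= alpha -> alpha < 1 / 2 ->
  (forall x, enorm (gt x - grad x) <= alpha * enorm (grad x)) ->
  0 < eps ->
  (* parameters of Algorithm 1 *)
  mu <= Lmin -> Lmin <= L0 ->
  Lmin <= 2 * L -> L0 <= 2 * L ->
  alg1_run f gt alpha Lmin L0 x0 xs Ls ->
  let xi := (1 - 2 * alpha) ^+ 2 in
  let Lmax := 2 * L in
  let Nstar := alg1_Nstar Lmax mu xi (f x0 - f xstar) eps in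
  (N = Nstar \/
   ((N < Nstar)%N /\ enorm (gt (xs N)) ^+ 2 <= 2 * eps * (1 - alpha) ^+ 2)) ->
  f (xs N) - f xstar <= eps / mu /\
  enorm (xs N - x0) <= 2 * Lmax / (mu * xi) * Num.sqrt (2 / Lmin * (f x0 - f xstar)).
Proof.
move=> f_grad _ grad_lip xstar_min mu_gt0 PL alpha_ge0 alpha_lt gt_err eps_gt0.
move=> mu_le_Lmin Lmin_le_L0 Lmin_le L0_le run xi Lmax Nstar stop.
have Lmin_gt0 := lt_le_trans mu_gt0 mu_le_Lmin.
split; last first.
  exact: (alg1_run_dist f_grad grad_lip alpha_ge0 alpha_lt gt_err Lmin_gt0
            Lmin_le_L0 L0_le Lmin_le run mu_gt0 mu_le_Lmin xstar_min PL).
case: stop => [-> | [_ stop]]; last exact: (alg1_gap_stop alpha_lt gt_err mu_gt0 PL stop).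
exact: (alg1_run_gap_Nstar f_grad grad_lip alpha_ge0 alpha_lt gt_err Lmin_gt0
          Lmin_le_L0 L0_le Lmin_le run mu_gt0 mu_le_Lmin xstar_min PL eps_gt0).
Qed.
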